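(* Let $r\ge 1$ and let $m_1,\dots,m_r,n$ be positive integers with $m=\sum_{i=1}^r m_i\le n$. Let $$h=\max\Big\{k\in\mathbb{Z},\ k\ge 2:\ \frac{m_i n}{k-1}\ge \Big\lceil \frac{m_i n}{k}\Big\rceil \text{ for all } i\in[r]\Big\}.$$ Then $$\chi_{=}(K_{m_1,\dots,m_r}\times K_n)=\sum_{i=1}^r\Big\lceil \frac{m_i n}{h}\Big\rceil .$$
   Context: All graphs are finite, simple and undirected; $[k]=\{1,\dots,k\}$. A (proper) $k$-coloring of $G$ is a map $f:V(G)\to[k]$ with $f(x)\ne f(y)$ whenever $xy\in E(G)$; its color classes are the sets $f^{-1}(i)$. An equitable $k$-coloring is a $k$-coloring in which any two color classes differ in size by at most $1$ (equivalently each class has size $\lfloor |V(G)|/k\rfloor$ or $\lceil |V(G)|/k\rceil$); $G$ is equitably $k$-colorable if it has one. The equitable chromatic number $\chi_{=}(G)$ is the minimum $k$ such that $G$ is equitably $k$-colorable. $K_{m_1,\dots,m_r}$ denotes the complete multipartite graph with parts of sizes $m_1,\dots,m_r$, and $K_n$ the complete graph on $n$ vertices. The Kronecker product $G\times H$ has vertex set $V(G)\times V(H)$, with $(x,y)$ adjacent to $(x',y')$ iff $xx'\in E(G)$ and $yy'\in E(H)$. *)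

(* Simple graphs = symmetric irreflexive boolean relations on a finType. *)
From mathcomp Require Import all_boot.
Set Implicit Arguments. Unset Strict Implicit. Unset Printing Implicit Defensive.

Definition proper_coloring (T : finType) (e : rel T) (k : nat) (f : T -> 'I_k) : Prop :=
  forall x y, e x y -> f x != f y.

Definition equitable_sizes (T : finType) (k : nat) (f : T -> 'I_k) : Prop :=
  forall i j : 'I_k, #|[set x | f x == i]| <= #|[set x | f x == j]| + 1.

Definition equitably_colorable (T : finType) (e : rel T) (k : nat) : Prop :=
  exists f : T -> 'I_k, proper_coloring e f /\ equitable_sizes f.

Definition is_eq_chromatic_number (T : finType) (e : rel T) (k : nat) : Prop :=
  equitably_colorable e k /\ forall k', equitably_colorable e k' -> k <= k'.

Definition complete_rel (n : nat) : rel 'I_n := fun x y => x != y.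

Definition multipartite_vertex (r : nat) (m : 'I_r -> nat) : finType :=
  {i : 'I_r & 'I_(m i)}.

Definition multipartite_rel (r : nat) (m : 'I_r -> nat) : rel (multipartite_vertex m) :=
  fun x y => tag x != tag y.

Definition kron_rel (T1 T2 : finType) (e1 : rel T1) (e2 : rel T2) : rel (T1 * T2) :=
  fun x y => e1 x.1 y.1 && e2 x.2 y.2.

Definition ceil_div (a k : nat) : nat := (a + k.-1) %/ k.

(* condition on k >= 2: m_i n / (k-1) >= ceil(m_i n / k) for all i,
   cleared of the (positive) denominator k-1 *)
Definition h_cond (r : nat) (m : 'I_r -> nat) (n k : nat) : Prop :=
  forall i : 'I_r, (k - 1) * ceil_div (m i * n) k <= m i * n.

Definition is_h (r : nat) (m : 'I_r -> nat) (n h : nat) : Prop :=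
  2 <= h /\ h_cond m n h /\ forall k, 2 <= k -> h_cond m n k -> k <= h.

From mathcomp Require Import all_boot zify.

Set Implicit Arguments.
Unset Strict Implicit.

(* Let c_i = ceil(m_i n / h) and K = sum_i c_i.

   Upper bound: each part P_i (a set of m_i n pairwise non-adjacent vertices)
   is cut into c_i near-equal shares; the defining property of h gives
   (h-1) c_i <= m_i n <= h c_i, so every share has size h-1 or h, and the
   K shares form an equitable coloring (lemma [equitably_colorable_by_parts]).

   Lower bound: take an equitable k-coloring whose classes have sizes in
   [M-1, M].  A color class meeting two parts lies in one column, so has at
   most m = sum m_i vertices.  If M <= m + 1, counting gives k >= m >= K
   (as h > n).  Otherwise every class lies inside one part, so part i is a
   union of a_i classes with (M-1) a_i <= m_i n <= M a_i; then M satisfies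
   the condition defining h, hence M <= h, hence c_i <= a_i and
   K <= sum_i a_i <= k. *)

Lemma ceil_div_le a h c : 0 < h -> a <= c * h -> ceil_div a h <= c.
Proof. by move=> h_gt0 a_le; rewrite /ceil_div -ltnS ltn_divLR //; lia. Qed.

Lemma ceil_div_ge a h : 0 < h -> a <= ceil_div a h * h.
Proof.
move=> h_gt0; rewrite /ceil_div.
by have := divn_eq (a + h.-1) h; have := ltn_pmod (a + h.-1) h_gt0; lia.
Qed.

Lemma ceil_div_gt0 a h : 0 < h -> 0 < a -> 0 < ceil_div a h.
Proof. by move=> h_gt0 a_gt0; rewrite /ceil_div divn_gt0 //; lia. Qed.

(* [share a c j] is the size of the j-th of c near-equal shares of a objects:
   the first [a %% c] shares get one extra object. *)
Definition share (a c j : nat) : nat := a %/ c + (j < a %% c).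

Lemma share_succ a c j : 0 < c -> j < c ->
  share a.+1 c j = (a %% c == j) + share a c j.
Proof.
move=> c_gt0 j_lt; rewrite /share.
have r_lt := ltn_pmod a c_gt0; have a_eq := divn_eq a c.
set q := a %/ c in a_eq *; set r := a %% c in a_eq r_lt *.
have [r1_lt | r1_ge] := ltnP r.+1 c.
  have -> : a.+1 = q * c + r.+1 by rewrite a_eq addnS.
  rewrite divnMDl // modnMDl divn_small // modn_small // addn0.
  by rewrite ltnS leq_eqVlt; case: (ltngtP j r); lia.
have r_eq : r = c.-1 by lia.
have -> : a.+1 = q.+1 * c + 0 by rewrite a_eq r_eq mulSn; lia.
rewrite divnMDl // modnMDl div0n mod0n addn0 /= r_eq.
by case: (ltngtP j c.-1); lia.
Qed.

Lemma share_band a c h j : 0 < c -> (h - 1) * c <= a <= h * c ->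
  h - 1 <= share a c j <= h.
Proof.
move=> c_gt0 /andP [a_ge a_le]; rewrite /share.
have r_lt := ltn_pmod a c_gt0; have a_eq := divn_eq a c.
set q := a %/ c in a_eq *; set r := a %% c in a_eq r_lt *.
have q_ge : h - 1 <= q by rewrite /q leq_divRL.
have q_le : q <= h by rewrite /q -ltnS ltn_divLR //; lia.
by case: (ltnP j r) => /= j_r; nia.
Qed.

Lemma split_set (T : finType) (c : nat) (A : {set T}) : 0 < c ->
  exists g : T -> 'I_c, forall j : 'I_c, #|[set x in A | g x == j]| = share #|A| c j.
Proof.
move=> c_gt0; move def_a: #|A| => a; elim: a A def_a => [|a IHa] A card_A.
  exists (fun => Ordinal c_gt0) => j.
  rewrite (cards0_eq card_A) /share div0n mod0n ltn0 addn0.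
  by apply/eqP; rewrite cards_eq0; apply/eqP/setP => x; rewrite !inE.
have [x0 x0A] : exists x0, x0 \in A by apply/card_gt0P; rewrite card_A.
have card_A' : #|A :\ x0| = a by move: card_A; rewrite (cardsD1 x0) x0A => -[].
have [g' share_g'] := IHa _ card_A'.
pose g x := if x == x0 then Ordinal (ltn_pmod a c_gt0) else g' x.
exists g => j; rewrite (cardsD1 x0) !inE x0A /g eqxx share_succ //; congr (_ + _).
by rewrite -share_g'; apply: eq_card => x; rewrite !inE; case: (x == x0).
Qed.

Lemma equitably_colorable_fin (T D : finType) (e : rel T) (f : T -> D) :
  (forall x y, e x y -> f x != f y) ->
  (forall d d', #|[set x | f x == d]| <= #|[set x | f x == d']| + 1) ->
  equitably_colorable e #|D|.
Proof.
move=> proper_f equi_f; exists (fun x => enum_rank (f x)); split.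
  by move=> x y /proper_f; rewrite (inj_eq enum_rank_inj).
have class_rank l : [set x | enum_rank (f x) == l] = [set x | f x == enum_val l].
  by apply/setP => x; rewrite !inE -(inj_eq enum_val_inj) enum_rankK.
by move=> i j; rewrite !class_rank equi_f.
Qed.

Lemma equitably_colorable_by_parts (T I : finType) (e : rel T) (p : T -> I)
    (c : I -> nat) (h : nat) :
  (forall x y, e x y -> p x != p y) ->
  (forall i, 0 < c i) ->
  (forall i, (h - 1) * c i <= #|[set x | p x == i]| <= h * c i) ->
  equitably_colorable e (\sum_i c i).
Proof.
move=> parts_indep c_gt0 part_band.
have [g share_g] := fin_all_exists (fun i => split_set [set x | p x == i] (c_gt0 i)).
pose D : finType := {i : I & 'I_(c i)}.
pose d x : D := Tagged (fun i => 'I_(c i)) (g (p x) x).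
have card_D : #|D| = \sum_i c i.
  rewrite card_tagged sumnE big_map big_enum /=.
  by apply: eq_bigr => i _; rewrite card_ord.
have class_d (u : D) :
    #|[set x | d x == u]| = share #|[set x | p x == tag u]| (c (tag u)) (tagged u).
  case: u => i j /=; rewrite -share_g; apply: eq_card => x; rewrite !inE.
  rewrite /d; move: (p x) => i'.
  case: (eqVneq i' i) => [-> | ne]; first by rewrite eq_Tagged.
  by rewrite andFb; apply/negbTE; apply: contra ne => /eqP/(congr1 tag) /= ->.
suff : equitably_colorable e #|D| by rewrite card_D.
apply: (@equitably_colorable_fin _ _ _ d).
  by move=> x y /parts_indep; apply: contra => /eqP/(congr1 tag) /= ->.
move=> u u'; rewrite !class_d.
have := share_band (tagged u) (c_gt0 (tag u)) (part_band (tag u)).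
have := share_band (tagged u') (c_gt0 (tag u')) (part_band (tag u')).
lia.
Qed.

Lemma sum_card_disjoint (I J : finType) (F : I -> {set J}) :
  (forall i i' j, j \in F i -> j \in F i' -> i = i') -> \sum_i #|F i| <= #|J|.
Proof.
move=> disj.
have -> : \sum_i #|F i| = \sum_(j : J) \sum_i (j \in F i).
  rewrite exchange_big; apply: eq_bigr => i _; rewrite -sum1_card big_mkcond.
  by apply: eq_bigr => j _; case: (j \in F i).
rewrite -sum1_card; apply: leq_sum => j _.
case: (pickP (fun i => j \in F i)) => [i0 j_i0 | none]; last first.
  by rewrite big1 // => i _; rewrite none.
rewrite (bigD1 i0) //= big1 ?addn0 ?leq_b1 // => i ne.
by apply/eqP; rewrite eqb0; apply: contra ne => j_i; apply/eqP; apply: disj j_i j_i0.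
Qed.

Section ColorClasses.

Variables (T : finType) (k : nat) (f : T -> 'I_k).

Definition color_class (j : 'I_k) : {set T} := [set x | f x == j].

Lemma equitable_band : equitable_sizes f ->
  exists M, forall j, M - 1 <= #|color_class j| <= M.
Proof.
move=> equi_f; case: (posnP k) => [k0 | k_gt0].
  by exists 0 => j; have := ltn_ord j; lia.
exists (\max_j #|color_class j|) => j; rewrite leq_bigmax andbT.
have ord_pos : 0 < #|'I_k| by rewrite card_ord.
have [j0 ->] := eq_bigmax (fun j => #|color_class j|) ord_pos.
by have := equi_f j0 j; rewrite /color_class; lia.
Qed.

Definition class_closed (A : {set T}) : Prop :=
  forall x y, x \in A -> f x = f y -> y \in A.

Lemma card_class_closed (A : {set T}) : class_closed A ->
  #|A| = \sum_(j in f @: A) #|color_class j|.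
Proof.
move=> closedA; rewrite -sum1_card (partition_big_imset f) /=.
apply: eq_bigr => _ /imsetP [x xA ->]; rewrite -sum1_card; apply: eq_bigl => y.
rewrite !inE; case: (eqVneq (f y) (f x)) => [fyx | _]; last by rewrite andbF.
by rewrite andbT (closedA x).
Qed.

Lemma class_closed_band (A : {set T}) M : class_closed A ->
  (forall j, M - 1 <= #|color_class j| <= M) ->
  (M - 1) * #|f @: A| <= #|A| <= M * #|f @: A|.
Proof.
move=> closedA band; rewrite card_class_closed // !(mulnC _ #|f @: A|).
by rewrite -!sum_nat_const; apply/andP; split; apply: leq_sum => j _;
  have := band j; lia.
Qed.

End ColorClasses.

(* Since n + 1 satisfies the condition defining h, h exceeds n. *)
Lemma h_gt_n (r : nat) (m : 'I_r -> nat) (n h : nat) : 0 < n -> is_h m n h -> n < h.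
Proof.
move=> n_gt0 [_ [_ h_max]]; apply: h_max => [| i]; first by lia.
rewrite subn1 /= mulnC leq_mul2r; apply/orP; right.
by apply: ceil_div_le => //; nia.
Qed.

(* If m_i n is split into c_i pieces of sizes in [M-1, M] for every i, then
   M satisfies the condition defining h, so M <= h and c_i >= ceil(m_i n / h). *)
Lemma ceil_le_of_band (r : nat) (m : 'I_r -> nat) (n h M : nat) (c : 'I_r -> nat) :
  is_h m n h -> 2 <= M ->
  (forall i, (M - 1) * c i <= m i * n <= M * c i) ->
  forall i, ceil_div (m i * n) h <= c i.
Proof.
move=> [h_ge2 [_ h_max]] M_ge2 band.
have M_le_h : M <= h.
  apply: h_max => // i; have /andP [c_lo c_hi] := band i.
  apply: leq_trans c_lo; rewrite leq_mul2l; apply/orP; right.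
  by apply: ceil_div_le; [lia | rewrite [_ * M]mulnC].
move=> i; have /andP [_ c_hi] := band i.
by apply: ceil_div_le; [lia | nia].
Qed.

Section KronMultipartiteComplete.

Variables (r : nat) (m : 'I_r -> nat) (n : nat).

Local Notation V := ((multipartite_vertex m * 'I_n)%type : finType).
Local Notation G := (kron_rel (@multipartite_rel r m) (@complete_rel n)).
Local Notation msum := (\sum_(i < r) m i).

Definition part (i : 'I_r) : {set V} := [set v | tag v.1 == i].

Lemma card_multipartite_vertex : #|multipartite_vertex m| = msum.
Proof.
rewrite card_tagged sumnE big_map big_enum /=.
by apply: eq_bigr => i _; rewrite card_ord.
Qed.

Lemma card_part i : #|part i| = m i * n.
Proof.
have -> : part i = setX [set u : multipartite_vertex m | tag u == i] setT.
  by apply/setP => v; rewrite !inE andbT.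
rewrite cardsX cardsT card_ord; congr (_ * _).
have -> : [set u : multipartite_vertex m | tag u == i]
    = [set Tagged (fun i => 'I_(m i)) a | a : 'I_(m i)].
  apply/setP => u; rewrite !inE; apply/idP/imsetP.
    by case: u => i' a /= /eqP E; subst i'; exists a.
  by case=> a _ ->.
by rewrite card_imset ?card_ord //; apply: eq_from_Tagged.
Qed.

Lemma card_column x : #|[set v : V | v.2 == x]| = msum.
Proof.
have -> : [set v : V | v.2 == x] = setX setT [set x] by apply/setP => v; rewrite !inE.
by rewrite cardsX cardsT cards1 muln1 card_multipartite_vertex.
Qed.

Lemma card_vertices : #|V| = msum * n.
Proof. by rewrite card_prod card_multipartite_vertex card_ord. Qed.

(* An independent set meeting two different parts lies inside one column,
   hence has at most m_1 + ... + m_r vertices. *)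
Lemma mixed_independent_card (S : {set V}) v w :
  {in S &, forall x y, ~~ G x y} -> v \in S -> w \in S -> tag v.1 != tag w.1 ->
  #|S| <= msum.
Proof.
move=> indep vS wS vw.
have G_adj x y : G x y = (tag x.1 != tag y.1) && (x.2 != y.2) by [].
have same_col : v.2 = w.2.
  by apply/eqP; apply: contraNT (indep v w vS wS) => ne; rewrite G_adj vw.
have S_col : S \subset [set u : V | u.2 == v.2].
  apply/subsetP => u uS; rewrite inE; apply: contraT => ne.
  case: (eqVneq (tag u.1) (tag v.1)) => [uv | uv].
    by have := indep u w uS wS; rewrite G_adj uv vw -same_col ne.
  by have := indep u v uS vS; rewrite G_adj uv ne.
by rewrite -(card_column v.2); apply: subset_leq_card.
Qed.

Lemma upper_bound h : (forall i, 0 < m i) -> 0 < n -> is_h m n h ->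
  equitably_colorable G (\sum_(i < r) ceil_div (m i * n) h).
Proof.
move=> m_gt0 n_gt0 [h_ge2 [h_ok _]].
apply: (@equitably_colorable_by_parts _ _ _ (fun v : V => tag v.1) _ h).
- by move=> x y /andP [].
- by move=> i; apply: ceil_div_gt0; [lia | rewrite muln_gt0 m_gt0].
- move=> i; have := card_part i; rewrite /part => ->.
  by rewrite h_ok [h * _]mulnC ceil_div_ge //; lia.
Qed.

(* Lower bound when the color classes are small (M <= m + 1):
   m n vertices in at most k classes of size <= m + 1 force k >= m. *)
Lemma lower_bound_small_classes h k (f : V -> 'I_k) M :
  0 < n -> msum <= n -> is_h m n h ->
  (forall j, M - 1 <= #|color_class f j| <= M) -> M <= msum.+1 ->
  \sum_(i < r) ceil_div (m i * n) h <= k.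
Proof.
move=> n_gt0 msum_le_n h_is band M_small.
have /andP [_ cover] := @class_closed_band _ _ f setT M (fun x y _ _ => in_setT y) band.
have colors_le : #|f @: setT| <= k by rewrite -[k in _ <= k]card_ord max_card.
move: cover; rewrite cardsT card_vertices => cover.
have msum_le_k : msum <= k by nia.
have n_lt_h := h_gt_n n_gt0 h_is.
apply: leq_trans msum_le_k; apply: leq_sum => i _.
by apply: ceil_div_le; [lia | rewrite leq_mul2l ltnW ?orbT].
Qed.

(* Lower bound when the color classes are large (M > m + 1): every class lies
   in a single part, so part i is a union of classes and [ceil_le_of_band]
   applies to their numbers. *)
Lemma lower_bound_large_classes h k (f : V -> 'I_k) M :
  is_h m n h -> proper_coloring G f ->
  (forall j, M - 1 <= #|color_class f j| <= M) -> msum.+1 < M ->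
  \sum_(i < r) ceil_div (m i * n) h <= k.
Proof.
move=> h_is proper_f band M_large.
have pure v w : f v = f w -> tag v.1 = tag w.1.
  move=> fvw; apply/eqP; apply: contraT => mixed.
  have indep : {in color_class f (f v) &, forall x y, ~~ G x y}.
    move=> x y; rewrite !inE => /eqP fx /eqP fy.
    by apply/negP => /proper_f; rewrite fx fy eqxx.
  have v_in : v \in color_class f (f v) by rewrite inE.
  have w_in : w \in color_class f (f v) by rewrite inE fvw.
  have := mixed_independent_card indep v_in w_in mixed.
  by have := band (f v); lia.
have part_band i : (M - 1) * #|f @: part i| <= m i * n <= M * #|f @: part i|.
  rewrite -card_part; apply: class_closed_band band => x y.
  by rewrite !inE => /eqP <- /pure ->.
apply: (@leq_trans (\sum_(i < r) #|f @: part i|)).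
  by apply: leq_sum => i _; apply: (ceil_le_of_band h_is _ part_band); lia.
rewrite -[k in _ <= k]card_ord; apply: sum_card_disjoint => i i' j.
move=> /imsetP [x xi ->] /imsetP [y yi' fxy].
by move: xi yi'; rewrite !inE (pure _ _ fxy) => /eqP <- /eqP.
Qed.

End KronMultipartiteComplete.

Theorem theorem3p1 (r : nat) (m : 'I_r -> nat) (n h : nat) :
  1 <= r ->
  (forall i, 0 < m i) ->
  0 < n ->
  \sum_(i < r) m i <= n ->
  is_h m n h ->
  is_eq_chromatic_number (kron_rel (@multipartite_rel r m) (@complete_rel n))
    (\sum_(i < r) ceil_div (m i * n) h).
Proof.
move=> _ m_gt0 n_gt0 msum_le_n h_is; split; first exact: upper_bound.
move=> k [f [proper_f equi_f]]; have [M band] := equitable_band equi_f.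
have [M_small | M_large] := leqP M (\sum_(i < r) m i).+1.
- exact: (lower_bound_small_classes n_gt0 msum_le_n h_is band).
- exact: (lower_bound_large_classes h_is proper_f band).
Qed.
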